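(* Let $2\le r<n$ be integers, let $p\in(0,1)$, and let real numbers $x_i\ge 0$ for $i=r+1,\dots,n$ and $y_i\ge u\ge 0$ for $i=1,\dots,r-1$ satisfy \[ \sum_{i=r+1}^n x_i + nu=\sum_{i=1}^{r-1}y_i. \] Then \[ \sum_{i=r+1}^n x_i^p+(r-1)u^p\le \Bigl(1-\frac1n\Bigr)^p\Bigl(\sum_{i=r+1}^n x_i^p+\sum_{i=1}^{r-1}y_i^p\Bigr). \] *)

(* real powers via powR (a `^ p), with 0 `^ p = 0 for p <> 0. *)
From mathcomp Require Import all_boot all_order all_algebra.
From mathcomp Require Import all_classical all_reals all_analysis.

From mathcomp Require Import all_boot all_order all_algebra.
From mathcomp Require Import all_classical all_reals all_analysis.
From mathcomp Require Import ring lra zify.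

Set Implicit Arguments.
Unset Strict Implicit.
Unset Printing Implicit Defensive.

Import Order.TTheory GRing.Theory Num.Theory.
Local Open Scope ring_scope.

(* Write k = n - r and m = r - 1, so that n = k + m + 1, and put X = sum x_i and
   B = X + (k + 2) u.  Each y_j lies in [u, B] and the y_j sum to (m - 1) u + B, so by
   concavity of t |-> t^p the sum of the y_j^p is at least (m - 1) u^p + B^p.
   Concavity in the weighted form sum c_i^(1-p) a_i^p <= (sum a_i)^p (weights summing
   to 1), with weight w = p / (k + m) on each x_i and 1 - k w on (k + 2) u, gives
   B^p >= w^(1-p) sum x_i^p + (1 - k w)^(1-p) (k + 2)^p u^p.  As w <= w^(1-p) and
   (1 - k w)^(1-p) (k + 2)^p >= 1 + m w (take logarithms and use ln (k + 2) >= ln 3 >= 1),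
   this yields sum x_i^p + sum y_j^p >= (1 + w) (sum x_i^p + m u^p), and Bernoulli's
   inequality (n / (n - 1))^p <= 1 + w concludes. *)

Lemma expR1_le3 (R : realType) : expR 1 <= 3 :> R.
Proof.
have e6 : expR (6^-1) <= 6 / 5 :> R.
  have t_gt0 : 0 < expR (6^-1) :> R by exact: expR_gt0.
  have tV : expR (6^-1) * (expR (6^-1))^-1 = 1 :> R by rewrite mulfV ?gt_eqF.
  have : 1 - 6^-1 <= (expR (6^-1))^-1 :> R by rewrite -expRN expR_ge1Dx.
  nra.
have -> : 1 = 6%:R * 6^-1 :> R by field.
rewrite expRM_natl; apply: le_trans (lerXn2r 6 _ _ e6) _; rewrite ?nnegrE ?expR_ge0 //; lra.
Qed.

Lemma sumr_const_seq (V : nmodType) (I : Type) (s : seq I) (c : V) :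
  \sum_(i <- s) c = c *+ size s.
Proof. by elim: s => [|i s IHs]; rewrite ?big_nil // big_cons IHs mulrS. Qed.

Section ConcavePowR.
Variables (R : realType) (p : R).
Hypotheses (p_gt0 : 0 < p) (p_lt1 : p < 1).

Lemma powR_AGM2 (a b : R) : 0 <= a -> 0 <= b ->
  a `^ p * b `^ (1 - p) <= p * a + (1 - p) * b.
Proof.
move=> a0 b0; have q_gt0 : 0 < 1 - p by rewrite subr_gt0.
have := conjugate_powR (powR_ge0 a p) (powR_ge0 b (1 - p))
  (eqbRL (invr_gt0 _) p_gt0) (eqbRL (invr_gt0 _) q_gt0) ltac:(by rewrite !invrK subrKC).
by rewrite -!powRrM !mulfV ?gt_eqF // !powRr1 // !invrK [a * p]mulrC [b * _]mulrC.
Qed.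

Lemma powR_le_tangent (y z : R) : 0 < y -> 0 <= z ->
  z `^ p <= y `^ p * (p * (z / y) + (1 - p)).
Proof.
move=> y_gt0 z0; have zy0 : 0 <= z / y by rewrite divr_ge0 // ltW.
have := powR_AGM2 zy0 ler01; rewrite powR1 !mulr1 => le_zy.
by rewrite -{1}(divfK (lt0r_neq0 y_gt0) z) powRM ?(ltW y_gt0) // mulrC ler_wpM2l ?powR_ge0.
Qed.

Lemma powR_chord_le (u y B : R) : 0 <= u -> u <= y -> y <= B ->
  (B - y) * u `^ p + (y - u) * B `^ p <= (B - u) * y `^ p.
Proof.
move=> u0 uy yB; have := le_trans u0 uy; rewrite le_eqVlt => /predU1P[y0|y_gt0].
  have u_eq0 : u = 0 by apply/le_anti; rewrite u0 y0 uy.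
  by rewrite -y0 u_eq0 powR0 ?gt_eqF // !(subrr, subr0, mulr0, mul0r, addr0).
have tan_u := powR_le_tangent y_gt0 u0.
have tan_B := powR_le_tangent y_gt0 (le_trans u0 (le_trans uy yB)).
apply: le_trans (lerD (ler_wpM2l _ tan_u) (ler_wpM2l _ tan_B)) _; rewrite ?subr_ge0 //.
by rewrite [leLHS](_ : _ = (B - u) * y `^ p) //; field; rewrite lt0r_neq0.
Qed.

Lemma sum_powR_ge_extremal (I : eqType) (s : seq I) (y : I -> R) (u B : R) :
  0 <= u -> {in s, forall i, u <= y i} ->
  \sum_(i <- s) y i = (size s)%:R * u + (B - u) ->
  (size s)%:R * u `^ p + (B `^ p - u `^ p) <= \sum_(i <- s) y i `^ p.
Proof.
move=> u0 u_le_y sum_y.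
have sum_ge (t : seq I) : {subset t <= s} -> (size t)%:R * u <= \sum_(i <- t) y i.
  move=> ts; rewrite mulr_natl -(sumr_const_seq t) big_seq_cond [leRHS]big_seq_cond.
  by apply: ler_sum => i /andP[/ts /u_le_y].
have y_le_B : {in s, forall i, y i <= B}.
  move=> i si; have := sum_y.
  rewrite (perm_big _ (perm_to_rem si)) (perm_size (perm_to_rem si)) big_cons /=.
  have := sum_ge _ (@mem_rem _ i s); rewrite -natr1; lra.
have : u <= B by have := sum_ge s (fun _ => id); rewrite sum_y; lra.
rewrite le_eqVlt => /predU1P[uB|u_lt_B].
  rewrite -uB subrr addr0 (eq_big_seq (fun=> u `^ p)) ?sumr_const_seq ?mulr_natl //.
  by move=> i si; congr (_ `^ p); apply/le_anti; rewrite u_le_y // uB y_le_B.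
have chord_sum : \sum_(i <- s) ((B - y i) * u `^ p + (y i - u) * B `^ p)
    <= (B - u) * \sum_(i <- s) y i `^ p.
  rewrite mulr_sumr big_seq [leRHS]big_seq; apply: ler_sum => i si.
  exact: powR_chord_le u0 (u_le_y i si) (y_le_B i si).
rewrite -(@ler_pM2l _ (B - u)) ?subr_gt0 //; apply: le_trans chord_sum.
rewrite big_split /= -!mulr_suml !sumrB !sumr_const_seq sum_y.
by rewrite [leRHS](_ : _ = (B - u) * ((size s)%:R * u `^ p + (B `^ p - u `^ p))) //; ring.
Qed.

Lemma sum_powR_weighted_le (I : eqType) (s : seq I) (c a : I -> R) :
  {in s, forall i, 0 <= c i} -> {in s, forall i, 0 <= a i} ->
  \sum_(i <- s) c i = 1 ->
  \sum_(i <- s) c i `^ (1 - p) * a i `^ p <= (\sum_(i <- s) a i) `^ p.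
Proof.
move=> c0 a0 sum_c; set A := \sum_(i <- s) a i.
have : 0 <= A by rewrite /A big_seq sumr_ge0.
rewrite le_eqVlt => /predU1P[A_eq0|A_gt0].
  have a_eq0 : {in s, forall i, a i = 0}.
    have : \sum_(i <- s | i \in s) a i == 0 by rewrite -big_seq -/A -A_eq0.
    by rewrite psumr_eq0 // => /allP a_eq0 i si; apply/eqP/(implyP (a_eq0 i si)).
  rewrite -A_eq0 powR0 ?gt_eqF // big_seq big1 // => i si.
  by rewrite a_eq0 // powR0 ?gt_eqF // mulr0.
have AGM_at i : i \in s ->
    c i `^ (1 - p) * a i `^ p <= A `^ p * (p * (a i / A) + (1 - p) * c i).
  move=> si; have a_div_A0 : 0 <= a i / A by rewrite divr_ge0 ?a0 ?ltW.
  rewrite -[in a i `^ p](divfK (lt0r_neq0 A_gt0) (a i)) powRM ?(ltW A_gt0) //.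
  rewrite [leLHS]mulrC [leLHS]mulrAC [leRHS]mulrC; apply: ler_wpM2r; first exact: powR_ge0.
  exact: powR_AGM2 a_div_A0 (c0 i si).
rewrite big_seq; apply: le_trans (ler_sum _ AGM_at) _.
rewrite -big_seq -mulr_sumr big_split /= -!mulr_sumr -mulr_suml sum_c -/A.
by rewrite divff ?lt0r_neq0 // !mulr1 subrKC mulr1.
Qed.

Lemma sum_powR_weighted_cons_le (I : eqType) (s : seq I) (x : I -> R) (b w : R) :
  {in s, forall i, 0 <= x i} -> 0 <= b -> 0 <= w -> (size s)%:R * w <= 1 ->
  w `^ (1 - p) * \sum_(i <- s) x i `^ p + (1 - (size s)%:R * w) `^ (1 - p) * b `^ p
    <= (\sum_(i <- s) x i + b) `^ p.
Proof.
move=> x0 b0 w0 sw_le1.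
have := sum_powR_weighted_le (s := None :: map Some s)
  (c := oapp (fun=> w) (1 - (size s)%:R * w)) (a := oapp x b).
rewrite !big_cons !big_map /= -mulr_sumr [_ + w `^ _ * _]addrC [b + _]addrC; apply.
- by case=> [i|] _ //=; rewrite subr_ge0.
- by case=> [i|] //=; rewrite inE /= mem_map; [exact: x0 | exact: Some_inj].
by rewrite sumr_const_seq -[w *+ _]mulr_natl subrK.
Qed.

Lemma bernoulli_powR_one_subV (t : R) : 0 < t ->
  1 <= (1 - (t + 1)^-1) `^ p * (1 + p / t).
Proof.
move=> t_gt0; have t1_gt0 : 0 < t + 1 by lra.
have Q0 : 0 <= (t + 1) / t by rewrite divr_ge0 ?ltW.
have Q_le : ((t + 1) / t) `^ p <= 1 + p / t.
  have := powR_AGM2 Q0 ler01; rewrite powR1 !mulr1.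
  suff -> : p * ((t + 1) / t) + (1 - p) = 1 + p / t by [].
  by field; rewrite lt0r_neq0.
apply: le_trans (ler_wpM2l (powR_ge0 _ _) Q_le).
have C0 : 0 <= 1 - (t + 1)^-1 by rewrite subr_ge0 invf_le1 //; lra.
by rewrite -powRM // [_ * _](_ : _ = 1) ?powR1 //; field; rewrite !lt0r_neq0.
Qed.

Lemma geo_mean_powR_ge (a b : R) : 0 < a -> expR 1 <= b ->
  1 + (1 - p) * (1 - a^-1) + p <= a `^ (1 - p) * b `^ p.
Proof.
move=> a_gt0 e_le_b; have b_gt0 : 0 < b := lt_le_trans (expR_gt0 1) e_le_b.
have ln_b : 1 <= ln b by rewrite -ler_expR lnK ?posrE.
have ln_a : 1 - a^-1 <= ln a.
  have aV_gt0 : 0 < a^-1 by rewrite invr_gt0.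
  have := @le_ln1Dx R (a^-1 - 1) ltac:(lra).
  rewrite subrKC lnV ?posrE //; lra.
rewrite /powR !gt_eqF // -expRD; apply: le_trans (expR_ge1Dx _).
have q_ge0 : 0 <= 1 - p by rewrite subr_ge0 ltW.
have := ler_wpM2l q_ge0 ln_a.
have := ler_wpM2l (ltW p_gt0) ln_b; lra.
Qed.

Lemma one_add_weight_le_geo_mean (k m : R) : 1 <= k -> 0 <= m ->
  1 + m * (p / (k + m)) <= (1 - k * (p / (k + m))) `^ (1 - p) * (k + 2) `^ p.
Proof.
move=> k_ge1 m0; have km_gt0 : 0 < k + m by lra.
have d_gt0 : 0 < k + m - k * p.
  have : 0 < k * (1 - p) by rewrite mulr_gt0 ?subr_gt0 //; lra.
  lra.
have mu_eq : 1 - k * (p / (k + m)) = (k + m - k * p) / (k + m).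
  by field; rewrite lt0r_neq0.
rewrite mu_eq; apply: le_trans (geo_mean_powR_ge (divr_gt0 d_gt0 km_gt0) _); last first.
  by apply: le_trans (expR1_le3 R) _; lra.
rewrite (_ : _ + p = 1 + m * (p / (k + m - k * p))); last by field; rewrite !lt0r_neq0.
rewrite lerD2l; apply: ler_wpM2l => //; apply: ler_wpM2l; first exact: ltW.
by rewrite lef_pV2 ?posrE // gerBl mulr_ge0 ?(ltW p_gt0) //; lra.
Qed.

End ConcavePowR.

Lemma sum_powR_le_one_subV (R : realType) (p : R) (I J : eqType) (s : seq I) (t : seq J)
    (x : I -> R) (y : J -> R) (u : R) :
  0 < p -> p < 1 -> (0 < size s)%N -> {in s, forall i, 0 <= x i} -> 0 <= u ->
  {in t, forall j, u <= y j} ->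
  \sum_(i <- s) x i + (size s + size t).+1%:R * u = \sum_(j <- t) y j ->
  \sum_(i <- s) x i `^ p + (size t)%:R * u `^ p
    <= (1 - (size s + size t).+1%:R^-1) `^ p *
       (\sum_(i <- s) x i `^ p + \sum_(j <- t) y j `^ p).
Proof.
move=> p_gt0 p_lt1 s_gt0 x_ge0 u_ge0 u_le_y sum_eq.
rewrite -natr1 natrD in sum_eq *; set k : R := (size s)%:R; set m : R := (size t)%:R.
set X := \sum_(i <- s) x i; set Sx := \sum_(i <- s) x i `^ p.
set Sy := \sum_(j <- t) y j `^ p.
have k_ge1 : 1 <= k by rewrite ler1n.
have m_ge0 : 0 <= m by rewrite ler0n.
set w := p / (k + m); set B := X + (k + 2) * u.
have w_gt0 : 0 < w by rewrite divr_gt0 //; lra.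
have kw_le : k * w <= p by rewrite mulrCA ger_pMr // ler_pdivrMr ?mul1r; lra.
have Sy_ge : m * u `^ p + (B `^ p - u `^ p) <= Sy.
  by apply: sum_powR_ge_extremal => //; rewrite -sum_eq -/m /B -/X; ring.
have k2_ge0 : 0 <= k + 2 by lra.
have Sx_le : w `^ (1 - p) * Sx + (1 - k * w) `^ (1 - p) * ((k + 2) * u) `^ p <= B `^ p.
  apply: sum_powR_weighted_cons_le => //; first exact: mulr_ge0.
    exact: ltW.
  exact: le_trans kw_le (ltW p_lt1).
have w_le : w <= w `^ (1 - p).
  by apply: ger1_powR; [rewrite w_gt0 /= ler_pdivrMr ?mul1r | ]; lra.
have geo_mean_ge : 1 + m * w <= (1 - k * w) `^ (1 - p) * (k + 2) `^ p.
  exact: (one_add_weight_le_geo_mean p_gt0 p_lt1 k_ge1 m_ge0).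
have bernoulli_ge : 1 <= (1 - (k + m + 1)^-1) `^ p * (1 + w).
  by apply: bernoulli_powR_one_subV; lra.
have Sx_ge0 : 0 <= Sx by apply: sumr_ge0 => i _; apply: powR_ge0.
have Sxy_ge : (1 + w) * (Sx + m * u `^ p) <= Sx + Sy.
  rewrite powRM in Sx_le; [|lra|by []].
  have := ler_wpM2r (powR_ge0 u p) geo_mean_ge; rewrite -mulrA.
  have := ler_wpM2r Sx_ge0 w_le; lra.
apply: le_trans (ler_wpM2l (powR_ge0 _ _) Sxy_ge); rewrite mulrA -[leLHS]mul1r.
by apply: ler_wpM2r => //; rewrite addr_ge0 ?mulr_ge0 ?powR_ge0.
Qed.

Theorem proposition4 (R : realType) (r n : nat) (p u : R) (x y : nat -> R) :
  (2 <= r)%N -> (r < n)%N -> 0 < p -> p < 1 ->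
  (forall i, (r.+1 <= i <= n)%N -> 0 <= x i) ->
  0 <= u ->
  (forall i, (1 <= i <= r.-1)%N -> u <= y i) ->
  \sum_(r.+1 <= i < n.+1) x i + n%:R * u = \sum_(1 <= i < r) y i ->
  \sum_(r.+1 <= i < n.+1) x i `^ p + (r.-1)%:R * u `^ p
    <= (1 - n%:R^-1) `^ p *
       (\sum_(r.+1 <= i < n.+1) x i `^ p + \sum_(1 <= i < r) y i `^ p).
Proof.
move=> r_ge2 r_lt_n p_gt0 p_lt1 x_ge0 u_ge0 y_ge_u sum_eq.
have n_eq : n = (size (index_iota r.+1 n.+1) + size (index_iota 1 r)).+1.
  by rewrite !size_iota; lia.
have m_eq : r.-1 = size (index_iota 1 r) by rewrite size_iota subn1.
rewrite m_eq [in n%:R]n_eq; apply: sum_powR_le_one_subV => //.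
- by rewrite size_iota subn_gt0.
- by move=> i; rewrite mem_index_iota => /andP[r_lt_i i_le_n]; apply: x_ge0; lia.
- by move=> i; rewrite mem_index_iota => /andP[i_gt0 i_lt_r]; apply: y_ge_u; lia.
by rewrite -n_eq.
Qed.
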